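(* (Model Existence.) Every member of an abstract consistency class has a model; if the abstract consistency class is complete, the member has a surjective model.
   Context: Types: a countable set of base types including a distinguished $o$; other base types are sorts ($\alpha$). Types: base types and $\sigma\tau$ (functions from $\sigma$ to $\tau$; $\sigma\tau\mu=\sigma(\tau\mu)$). Countably many names, each with a unique type, infinitely many of each type. Terms: names; $st:\mu$ for $s:\tau\mu,t:\tau$; $\lambda x.t:\sigma\tau$ for a name $x:\sigma$, $t:\tau$. Logical constants: $\neg:oo$, $=_\sigma:\sigma\sigma o$; other names are variables. Formulas: terms of type $o$; $s=_\sigma t$ is $(=_\sigma s)t$; $s\neq_\sigma t$ is $\neg(s=_\sigma t)$. Semantics: a frame $\mathcal{D}$ maps types to nonempty sets with $\mathcal{D}(\sigma\tau)\subseteq(\mathcal{D}\sigma\to\mathcal{D}\tau)$. An assignment $\mathcal{I}$ into $\mathcal{D}$ extends $\mathcal{D}$ and maps names $x:\sigma$ into $\mathcal{D}\sigma$; $\mathcal{I}^x_a$ is the update. Partial evaluation: $\hat{\mathcal{I}}x=\mathcal{I}x$; $\hat{\mathcal{I}}(st)=(\hat{\mathcal{I}}s)(\hat{\mathcal{I}}t)$ when defined; $\hat{\mathcal{I}}(\lambda x.s)=f$ if $\lambda x.s:\sigma\tau$, $f\in\mathcal{D}(\sigma\tau)$ and $\widehat{\mathcal{I}^x_a}s=fa$ for all $a\in\mathcal{D}\sigma$. Interpretation: assignment with total evaluation; surjective if every $a\in\mathcal{I}\sigma$ equals $\hat{\mathcal{I}}s$ for some $s:\sigma$. Logical: $\mathcal{I}o=\{0,1\}$,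 $\mathcal{I}(\neg)$ negation, $\mathcal{I}(=_\sigma)$ identity. Model of a set of formulas: logical interpretation evaluating all of them to $1$. Normalization: fixed type-preserving total $[\cdot]$; $s$ normal iff $[s]=s$; (N1) $[[s]]=[s]$; (N2) $[[s]t]=[st]$; (N3) $[xs_1\dots s_n]=x[s_1]\dots[s_n]$ for a name $x$, $n\ge0$, $xs_1\dots s_n$ of base type; (N4) $\hat{\mathcal{I}}[s]=\hat{\mathcal{I}}s$ for every interpretation. Substitutions: type-preserving partial functions $\theta$ from names to terms ($\theta^x_s$ update), each extending to a type-preserving total $\hat\theta$ with (S1) $\hat\theta x=\theta x$ if $x\in\mathrm{Dom}\theta$, else $x$; (S2) $\hat\theta(st)=(\hat\theta s)(\hat\theta t)$; (S3) $[(\hat\theta(\lambda x.s))t]=[\widehat{\theta^x_t}s]$; (S4) $[\hat\emptyset s]=[s]$. A branch is a set of normal formulas. An abstract consistency class is a set $\Gamma$ of branches such that every $A\in\Gamma$ satisfies ($x$ ranges over variables): (DN) if $\neg\neg s\in A$ then $A\cup\{s\}\in\Gamma$; (BQ) if $s=_ot\in A$ then $A\cup\{s,t\}\in\Gamma$ or $A\cup\{\neg s,\neg t\}\in\Gamma$; (BE) if $s\neq_ot\in A$ then $A\cup\{s,\neg t\}\in\Gamma$ or $A\cup\{\neg s,t\}\in\Gamma$; (FQ) if $s=_{\sigma\tau}t\in A$ then $A\cup\{[su]=[tu]\}\in\Gamma$ for every normal $u:\sigma$; (FE) if $s\neq_{\sigma\tau}t\in A$ then $A\cup\{[sx]\neq[tx]\}\in\Gamma$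 for some variable $x$; (Mat) if $xs_1\dots s_n,\neg xt_1\dots t_n\in A$ then $n\ge1$ and $A\cup\{s_i\neq t_i\}\in\Gamma$ for some $i$; (Dec) if $xs_1\dots s_n\neq_\alpha xt_1\dots t_n\in A$ then $n\ge1$ and $A\cup\{s_i\neq t_i\}\in\Gamma$ for some $i$; (Con) if $s=_\alpha t,u\neq_\alpha v\in A$ then $A\cup\{s\neq u,t\neq u\}\in\Gamma$ or $A\cup\{s\neq v,t\neq v\}\in\Gamma$. $\Gamma$ is complete if for all $A\in\Gamma$ and normal formulas $s$, $A\cup\{s\}\in\Gamma$ or $A\cup\{\neg s\}\in\Gamma$. *)

From mathcomp Require Import all_boot.
From Stdlib Require Import PeanoNat.
Set Implicit Arguments.
Unset Strict Implicit.
Unset Printing Implicit Defensive.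

Section STT.

Variable B : countType.
Variable bo : B.

Inductive ty : Type := Base of B | Arr of ty & ty.

Definition o : ty := Base bo.

Inductive name : Type :=
| NVar of ty & nat
| NNeg
| NEq of ty.

Definition nty (x : name) : ty :=
  match x with
  | NVar s _ => s
  | NNeg => Arr o o
  | NEq s => Arr s (Arr s o)
  end.

Definition ty_eq_dec (s t : ty) : {s = t} + {s <> t}.
Proof. decide equality; exact: eq_comparable. Defined.

Definition name_eq_dec (x y : name) : {x = y} + {x <> y}.
Proof. decide equality; first [exact: ty_eq_dec | exact: PeanoNat.Nat.eq_dec]. Defined.

Inductive tm : ty -> Type :=
| Nm (x : name) : tm (nty x)
| App (s t : ty) : tm (Arr s t) -> tm s -> tm t
| Lam (x : name) (t : ty) : tm t -> tm (Arr (nty x) t).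

Arguments App {s t} _ _.
Arguments Lam x {t} _.

Definition Neg (s : tm o) : tm o := @App o o (Nm NNeg) s.
Definition Eqt (s : ty) (a c : tm s) : tm o :=
  @App s o (@App s (Arr s o) (Nm (NEq s)) a) c.
Definition Neq (s : ty) (a c : tm s) : tm o := Neg (Eqt a c).

Fixpoint head (s : ty) (t : tm s) : option name :=
  match t with
  | Nm x => Some x
  | App _ _ u _ => head u
  | Lam _ _ _ => None
  end.

(* A frame: nonempty sets D s, with D (s t) a set of functions D s -> D t,
   represented through an extensional (injective) application map. *)
Record frame := Frame {
  dom : ty -> Type;
  app : forall s t, dom (Arr s t) -> dom s -> dom t;
  app_ext : forall s t (f g : dom (Arr s t)), (forall a, app f a = app g a) -> f = g;
  dom_ne : forall s, inhabited (dom s) }.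

Arguments app {f0 s t} _ _.

Definition asg (F : frame) := forall x : name, dom F (nty x).

Definition upd (F : frame) (I : asg F) (x : name) (a : dom F (nty x)) : asg F :=
  fun y => match name_eq_dec x y with
           | left e => eq_rect x (fun z => dom F (nty z)) a y e
           | right _ => I y
           end.
Arguments upd {F} I x a.

(* partial evaluation, as a relation: ev I t a  means  \hat I t = a *)
Inductive ev (F : frame) : asg F -> forall s, tm s -> dom F s -> Prop :=
| ev_Nm (I : asg F) (x : name) : ev I (Nm x) (I x)
| ev_App (I : asg F) s t (u : tm (Arr s t)) (v : tm s) (f : dom F (Arr s t)) (a : dom F s) :
    ev I u f -> ev I v a -> ev I (App u v) (app f a)
| ev_Lam (I : asg F) (x : name) t (u : tm t) (f : dom F (Arr (nty x) t)) :
    (forall a : dom F (nty x), ev (upd I x a) u (app f a)) -> ev I (Lam x u) f.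

Definition interp (F : frame) (I : asg F) : Prop :=
  forall s (t : tm s), exists a, ev I t a.

Definition surjective (F : frame) (I : asg F) : Prop :=
  forall s (a : dom F s), exists t : tm s, ev I t a.

(* logical: D o is {0,1} (via the bijection b), I(neg) is negation,
   I(=_s) is identity *)
Definition logical_by (F : frame) (I : asg F) (b : dom F o -> bool) : Prop :=
  bijective b /\
  (forall a : dom F o, b (app (I NNeg : dom F (Arr o o)) a) = ~~ b a) /\
  (forall s (a c : dom F s),
      b (app (app (I (NEq s) : dom F (Arr s (Arr s o))) a) c) = true <-> a = c).

Definition model (F : frame) (I : asg F) (A : tm o -> Prop) : Prop :=
  interp I /\
  exists b, logical_by I b /\ forall s, A s -> exists v, ev I s v /\ b v = true.

Definition normal (nf : forall s, tm s -> tm s) s (t : tm s) : Prop := nf s t = t.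

Fixpoint argnorm (nf : forall s, tm s -> tm s) s (t : tm s) : tm s :=
  match t in tm s0 return tm s0 with
  | Nm x => Nm x
  | App _ _ u v => App (argnorm nf u) (nf _ v)
  | Lam x _ u => Lam x u
  end.

Definition is_normalization (nf : forall s, tm s -> tm s) : Prop :=
  (forall s (t : tm s), nf s (nf s t) = nf s t) /\
  (forall s t (u : tm (Arr s t)) (v : tm s), nf t (App (nf _ u) v) = nf t (App u v)) /\
  (forall (b : B) (t : tm (Base b)) (x : name),
               head t = Some x -> nf _ t = argnorm nf t) /\
  (forall (F : frame) (I : asg F), interp I ->
               forall s (t : tm s) (a : dom F s), ev I (nf s t) a <-> ev I t a).

Definition sub := forall x : name, option (tm (nty x)).

Definition supd (th : sub) (x : name) (t : tm (nty x)) : sub :=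
  fun y => match name_eq_dec x y with
           | left e => Some (eq_rect x (fun z => tm (nty z)) t y e)
           | right _ => th y
           end.
Arguments supd th x t : clear implicits.

Definition sub0 : sub := fun _ => None.

Definition is_subst (nf : forall s, tm s -> tm s) (sb : sub -> forall s, tm s -> tm s) : Prop :=
  (forall (th : sub) (x : name),
               sb th _ (Nm x) = match th x with Some t => t | None => Nm x end) /\
  (forall (th : sub) s t (u : tm (Arr s t)) (v : tm s),
               sb th _ (App u v) = App (sb th _ u) (sb th _ v)) /\
  (forall (th : sub) (x : name) t (u : tm t) (v : tm (nty x)),
               nf t (App (sb th _ (Lam x u)) v) = nf t (sb (supd th x v) _ u)) /\
  (forall s (t : tm s), nf s (sb sub0 s t) = nf s t).

Definition add (A : tm o -> Prop) (s : tm o) : tm o -> Prop := fun u => A u \/ u = s.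

(* some_arg P (x s1..sn) (x t1..tn) : n >= 1 and P si ti for some i *)
Inductive some_arg (P : forall s, tm s -> tm s -> Prop) : forall t, tm t -> tm t -> Prop :=
| sa_here s t (u v : tm (Arr s t)) (a c : tm s) :
    P s a c -> some_arg P (App u a) (App v c)
| sa_there s t (u v : tm (Arr s t)) (a c : tm s) :
    some_arg P u v -> some_arg P (App u a) (App v c).

Record acc (nf : forall s, tm s -> tm s) (G : (tm o -> Prop) -> Prop) : Prop := {
  acc_branch : forall A, G A -> forall s, A s -> normal nf s;
  acc_DN : forall A, G A -> forall s, A (Neg (Neg s)) -> G (add A s);
  acc_BQ : forall A, G A -> forall s t : tm o, A (Eqt s t) ->
     G (add (add A s) t) \/ G (add (add A (Neg s)) (Neg t));
  acc_BE : forall A, G A -> forall s t : tm o, A (Neq s t) ->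
     G (add (add A s) (Neg t)) \/ G (add (add A (Neg s)) t);
  acc_FQ : forall A, G A -> forall s t (f g : tm (Arr s t)), A (Eqt f g) ->
     forall u : tm s, normal nf u -> G (add A (Eqt (nf t (App f u)) (nf t (App g u))));
  acc_FE : forall A, G A -> forall s t (f g : tm (Arr s t)), A (Neq f g) ->
     exists n : nat,
       G (add A (Neq (nf t (App f (Nm (NVar s n)))) (nf t (App g (Nm (NVar s n))))));
  acc_Mat : forall A, G A -> forall (s : ty) (n : nat) (u v : tm o),
     head u = Some (NVar s n) -> head v = Some (NVar s n) ->
     A u -> A (Neg v) -> some_arg (fun r a c => G (add A (Neq a c))) u v;
  acc_Dec : forall A, G A -> forall (al : B), al <> bo ->
     forall (s : ty) (n : nat) (u v : tm (Base al)),
     head u = Some (NVar s n) -> head v = Some (NVar s n) ->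
     A (Neq u v) -> some_arg (fun r a c => G (add A (Neq a c))) u v;
  acc_Con : forall A, G A -> forall (al : B), al <> bo ->
     forall s t u v : tm (Base al), A (Eqt s t) -> A (Neq u v) ->
     G (add (add A (Neq s u)) (Neq t u)) \/ G (add (add A (Neq s v)) (Neq t v)) }.

Definition complete (nf : forall s, tm s -> tm s) (G : (tm o -> Prop) -> Prop) : Prop :=
  forall A, G A -> forall s : tm o, normal nf s -> G (add A s) \/ G (add A (Neg s)).

End STT.

From Pilot Require Import Defs.
From mathcomp Require Import all_boot.
From mathcomp Require classical_sets.
From Stdlib Require Import Eqdep_dec Classical ClassicalEpsilon FunctionalExtensionality.
From Stdlib Require Import PropExtensionality ProofIrrelevance Program.Equality.
From Stdlib Require Cantor.
Set Implicit Arguments.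
Unset Strict Implicit.
Unset Printing Implicit Defensive.

(* A branch of an abstract
   consistency class is first extended along a chain of branches of the class, each
   stage answering one request (an instance of a closure condition); since terms are
   countable, every request is answered at arbitrarily late stages, so the union of
   the chain is a Hintikka set.  A Hintikka set [E] then has a model of possible
   values: a value of type o is a truth value, a value of a sort is a maximal clique
   of pairwise compatible normal terms, and a value of a function type is a function
   realised by some term.  Every term possesses the value it evaluates to, which makes
   the formulas of [E] true; when [E] is complete, possession is functional, so every
   value is the value of a term. *)

Section Terms.
Variables (B : countType) (bo : B).
Local Notation ty := (ty B).
Local Notation tm := (tm bo).
Local Notation name := (name B).

Lemma name_UIP (x : name) (e : x = x) : e = erefl.
Proof. apply: UIP_dec; exact: name_eq_dec. Qed.

Lemma tm_existT_inj (s : ty) (u v : tm s) :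
  existT (fun s => tm s) s u = existT _ s v -> u = v.
Proof. apply: inj_pair2_eq_dec; exact: ty_eq_dec. Qed.

Lemma Eqt_inj s (a c a' c' : tm s) : Eqt a c = Eqt a' c' -> a = a' /\ c = c'.
Proof. by case=> /tm_existT_inj -> /tm_existT_inj ->. Qed.

Lemma upd_same (F : frame B) (I : asg bo F) x a : @upd _ _ _ I x a x = a.
Proof. rewrite /upd; case: (name_eq_dec x x) => [e|//]; by rewrite (name_UIP e). Qed.

Lemma upd_other (F : frame B) (I : asg bo F) x a y : x <> y -> @upd _ _ _ I x a y = I y.
Proof. by rewrite /upd; case: (name_eq_dec x y). Qed.

Lemma supd_same (th : sub bo) x (t : tm (nty bo x)) : @supd _ _ th x t x = Some t.
Proof. rewrite /supd; case: (name_eq_dec x x) => [e|//]; by rewrite (name_UIP e). Qed.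

Lemma supd_other (th : sub bo) x (t : tm (nty bo x)) y : x <> y -> @supd _ _ th x t y = th y.
Proof. by rewrite /supd; case: (name_eq_dec x y). Qed.

Lemma ev_inv (F : frame B) (I : asg bo F) s (t : tm s) b : ev I t b ->
  match t in Defs.tm _ s0 return dom F s0 -> Prop with
  | Nm x => fun b => b = I x
  | App _ _ u v => fun b => exists f a, ev I u f /\ ev I v a /\ b = app f a
  | Lam x _ u => fun f => forall a, ev (@upd _ _ _ I x a) u (app f a)
  end b.
Proof. by case=> //= I' s' t' u v f a Hu Hv; exists f, a. Qed.

Lemma ev_functional (F : frame B) (I : asg bo F) s (t : tm s) a b :
  ev I t a -> ev I t b -> a = b.
Proof.
elim: t I a b => [x|s0 t0 u IHu v IHv|x t0 u IHu] I a b Ha Hb.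
- by rewrite (ev_inv Ha) (ev_inv Hb).
- move: (ev_inv Ha) (ev_inv Hb) => [f [c [Hf [Hc ->]]]] [f' [c' [Hf' [Hc' ->]]]].
  by rewrite (IHu _ _ _ Hf Hf') (IHv _ _ _ Hc Hc').
- move: (ev_inv Ha) (ev_inv Hb) => /= Hf Hg.
  apply: app_ext => c; exact: IHu _ _ _ (Hf c) (Hg c).
Qed.

Lemma some_arg_App P s t (u v : tm (Arr s t)) a c :
  some_arg P (App u a) (App v c) -> P s a c \/ some_arg P u v.
Proof. move=> H; dependent destruction H; by [left|right]. Qed.

Lemma some_arg_Nm P x (v : tm (nty bo x)) : ~ some_arg P (Nm bo x) v.
Proof. move=> H; dependent destruction H. Qed.

Lemma some_arg_mono (P Q : forall s, tm s -> tm s -> Prop) t (u v : tm t) :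
  (forall r a c, P r a c -> Q r a c) -> some_arg P u v -> some_arg Q u v.
Proof.
move=> PQ; elim=> [s t0 u0 v0 a c Pac|s t0 u0 v0 a c _ IH]; last exact: sa_there.
by apply: sa_here; apply: PQ.
Qed.

Lemma head_argnorm (nf : forall s, tm s -> tm s) s (t : tm s) :
  Defs.head (argnorm nf t) = Defs.head t.
Proof. by elim: t => //= s0 t0 u IH. Qed.

End Terms.

Lemma maximal_clique_ext (T : Type) (Q : T -> Prop) (R : T -> T -> Prop) (S : T -> Prop) :
  (forall u, S u -> Q u) -> (forall u v, S u -> S v -> R u v) ->
  exists a : T -> Prop, (forall u, S u -> a u) /\ (forall u, a u -> Q u) /\
    (forall u v, a u -> a v -> R u v) /\
    (forall u, Q u -> R u u -> (forall v, a v -> R u v /\ R v u) -> a u).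
Proof.
move=> SQ SR.
(* [S] is joined to every candidate so that the empty chain has an upper bound too. *)
pose P X := (forall u, S u \/ X u -> Q u) /\
  (forall u v, S u \/ X u -> S v \/ X v -> R u v).
have [A [[AQ AR] Amax]] : exists A, P A /\ (forall A', classical_sets.proper A A' -> ~ P A').
  apply: classical_sets.Zorn_bigcup => F FP Ftot; split.
  - move=> u [/SQ //|[X FX Xu]]; by case: (FP X FX) => H _; apply: H; right.
  - move=> u v [Su|[X FX Xu]] [Sv|[Y FY Yv]]; first exact: SR.
    + by case: (FP Y FY) => _ H; apply: H; [left|right].
    + by case: (FP X FX) => _ H; apply: H; [right|left].
    + case: (Ftot X Y FX FY) => [XY|YX].
      * by case: (FP Y FY) => _ H; apply: H; right => //; apply: XY.
      * by case: (FP X FX) => _ H; apply: H; right => //; apply: YX.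
exists (fun u => S u \/ A u); split; first by move=> u; left.
split; first exact: AQ.
split; first exact: AR.
move=> u Qu Ruu Hu; right; apply: NNPP => nAu.
apply: (Amax (fun w => A w \/ w = u)); first split.
- by move=> w Aw; left.
- by move=> H; apply: nAu; apply: (H u); right.
- split; first by move=> w [Sw|[Aw|->]] //; apply: AQ; [left|right].
  move=> w1 w2 [Sw1|[Aw1|->]] [Sw2|[Aw2|->]] //; try by apply: AR; auto.
  all: first [exact: (Hu w1 ltac:(auto)).2 | exact: (Hu w2 ltac:(auto)).1].
Qed.

Section Hintikka.
Variables (B : countType) (bo : B) (nf : forall s, tm bo s -> tm bo s).
Local Notation tm := (tm bo).
Local Notation o := (o bo).

Record hintikka (E : tm o -> Prop) : Prop := {
  hk_normal : forall s, E s -> normal nf s;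
  hk_DN : forall s, E (Neg (Neg s)) -> E s;
  hk_BQ : forall s t : tm o, E (Eqt s t) -> E s /\ E t \/ E (Neg s) /\ E (Neg t);
  hk_BE : forall s t : tm o, E (Neq s t) -> E s /\ E (Neg t) \/ E (Neg s) /\ E t;
  hk_FQ : forall s t (f g : tm (Arr s t)), E (Eqt f g) ->
    forall u : tm s, normal nf u -> E (Eqt (nf (App f u)) (nf (App g u)));
  hk_FE : forall s t (f g : tm (Arr s t)), E (Neq f g) -> exists n,
    E (Neq (nf (App f (Nm bo (NVar s n)))) (nf (App g (Nm bo (NVar s n)))));
  hk_Mat : forall s n (u v : tm o),
    Defs.head u = Some (NVar s n) -> Defs.head v = Some (NVar s n) ->
    E u -> E (Neg v) -> some_arg (fun _ a c => E (Neq a c)) u v;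
  hk_Dec : forall al, al <> bo -> forall s n (u v : tm (Base al)),
    Defs.head u = Some (NVar s n) -> Defs.head v = Some (NVar s n) ->
    E (Neq u v) -> some_arg (fun _ a c => E (Neq a c)) u v;
  hk_Con : forall al, al <> bo -> forall s t u v : tm (Base al),
    E (Eqt s t) -> E (Neq u v) ->
    E (Neq s u) /\ E (Neq t u) \/ E (Neq s v) /\ E (Neq t v) }.

Definition hintikka_complete (E : tm o -> Prop) : Prop :=
  forall s : tm o, normal nf s -> E s \/ E (Neg s).

End Hintikka.

Section PossibleValues.
Variables (B : countType) (bo : B) (nf : forall s, tm bo s -> tm bo s).
Variable E : tm bo (o bo) -> Prop.
Hypotheses (HN : is_normalization nf) (HE : hintikka nf E).
Local Notation ty := (ty B).
Local Notation tm := (tm bo).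
Local Notation name := (name B).
Local Notation o := (o bo).

Lemma nf_idem s (t : tm s) : nf (nf t) = nf t.
Proof. by case: HN. Qed.

Lemma nf_App_nf s t (u : tm (Arr s t)) v : nf (App (nf u) v) = nf (App u v).
Proof. by case: HN => _ []. Qed.

Lemma nf_head b (t : tm (Base b)) x : Defs.head t = Some x -> nf t = argnorm nf t.
Proof. by case: HN => _ [_ [H _]]; apply: H. Qed.

Lemma nf_Neg (s : tm o) : nf (Neg s) = Neg (nf s).
Proof. by rewrite (@nf_head bo (Neg s) (NNeg B)). Qed.

Lemma nf_Eqt s (a c : tm s) : nf (Eqt a c) = Eqt (nf a) (nf c).
Proof. by rewrite (@nf_head bo (Eqt a c) (NEq s)). Qed.

Lemma nf_var b n : nf (Nm bo (NVar (Base b) n)) = Nm bo (NVar (Base b) n).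
Proof. by rewrite (@nf_head b _ (NVar (Base b) n)). Qed.

Lemma E_nf (a : tm o) : E a -> nf a = a.
Proof. by move=> /(hk_normal HE). Qed.

Lemma E_Eqt_nf s (a c : tm s) : E (Eqt a c) -> nf a = a /\ nf c = c.
Proof. by move=> /E_nf; rewrite nf_Eqt => /Eqt_inj. Qed.

Definition castO (b : B) (e : b = bo) (u : tm (Base b)) : tm o :=
  eq_rect b (fun b => tm (Base b)) u bo e.

(* [compat u v]: identifying the values of [u] and [v] contradicts nothing in [E]. *)
Fixpoint compat (s : ty) : tm s -> tm s -> Prop :=
  match s with
  | Base b => fun u v => match eq_comparable b bo with
      | left e => ~ (E (castO e (nf u)) /\ E (Neg (castO e (nf v)))) /\
                  ~ (E (Neg (castO e (nf u))) /\ E (castO e (nf v)))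
      | right _ => ~ E (Neq (nf u) (nf v)) /\ ~ E (Neq (nf v) (nf u))
      end
  | Arr s1 s2 => fun u v =>
      forall a c, compat a a -> compat c c -> compat a c -> compat (App u a) (App v c)
  end.

Lemma eq_comparable_bo : eq_comparable bo bo = left erefl.
Proof. case: eq_comparable => [e|//]; by rewrite (eq_irrelevance e erefl). Qed.

Lemma compat_o (u v : tm o) :
  compat u v <-> ~ (E (nf u) /\ E (Neg (nf v))) /\ ~ (E (Neg (nf u)) /\ E (nf v)).
Proof. by rewrite /Defs.o /= eq_comparable_bo. Qed.

Lemma compat_sort al (ne : al <> bo) (u v : tm (Base al)) :
  compat u v <-> ~ E (Neq (nf u) (nf v)) /\ ~ E (Neq (nf v) (nf u)).
Proof. by rewrite /=; case: eq_comparable. Qed.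

Lemma compat_nf s (u v : tm s) : compat u v <-> compat (nf u) (nf v).
Proof.
elim: s u v => [b|s1 IH1 s2 IH2] u v /=; first by rewrite !nf_idem.
split=> H a c Ha Hc Hac.
- by rewrite IH2 !nf_App_nf -IH2; apply: H.
- by rewrite IH2 -(nf_App_nf u) -(nf_App_nf v) -IH2; apply: H.
Qed.

Lemma compat_sym s (u v : tm s) : compat u v -> compat v u.
Proof.
elim: s u v => [b|s1 IH1 s2 IH2] u v /=; first by case: eq_comparable; tauto.
move=> H a c Ha Hc Hac; apply: IH2; apply: H => //; exact: IH1.
Qed.

(* The last premise is the second half of [compat_spec] at the argument type, stored here
   because argument types are not structurally smaller than the spine's type. *)
Inductive spine_compat : forall s, tm s -> tm s -> Prop :=
| spine_var s n : spine_compat (Nm bo (NVar s n)) (Nm bo (NVar s n))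
| spine_App s t (h h' : tm (Arr s t)) (a c : tm s) : spine_compat h h' -> compat a c ->
    (forall a c : tm s, compat a c -> ~ E (Neq (nf a) (nf c))) ->
    spine_compat (App h a) (App h' c).

Lemma spine_compat_head s (h h' : tm s) : spine_compat h h' ->
  exists s0 n, Defs.head h = Some (NVar s0 n) /\ Defs.head h' = Some (NVar s0 n).
Proof. elim=> [s0 n|s0 t h0 h0' a c _ IH _ _] /=; [by exists s0, n | exact: IH]. Qed.

Lemma spine_compat_sym s (h h' : tm s) : spine_compat h h' -> spine_compat h' h.
Proof.
elim=> [s0 n|s0 t h0 h0' a c _ IH Hac HNeq]; first exact: spine_var.
by apply: spine_App => //; apply: compat_sym.
Qed.

Lemma spine_compat_no_Neq s (h h' : tm s) : spine_compat h h' ->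
  ~ some_arg (fun _ a c => E (Neq a c)) (argnorm nf h) (argnorm nf h').
Proof.
elim=> [s0 n|s0 t h0 h0' a c _ IH Hac HNeq] /=; first exact: (@some_arg_Nm _ _ _ (NVar s0 n)).
by case/some_arg_App => [/(HNeq _ _ Hac)|/IH].
Qed.

Lemma compat_spec s : (forall h h' : tm s, spine_compat h h' -> compat h h') /\
                      (forall u v : tm s, compat u v -> ~ E (Neq (nf u) (nf v))).
Proof.
elim: s => [b|s1 [IHspine1 IHNeq1] s2 [IHspine2 IHNeq2]].
- split.
  + move=> h h' H; have [x [n [Hh Hh']]] := spine_compat_head H.
    have no_arg := spine_compat_no_Neq H.
    have no_arg' := spine_compat_no_Neq (spine_compat_sym H).
    rewrite /= (nf_head Hh) (nf_head Hh'); case: eq_comparable => [e|ne].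
    * subst b => /=; split=> -[H1 H2].
      -- by apply: no_arg; apply: (hk_Mat HE (s := x) (n := n)); rewrite ?head_argnorm.
      -- by apply: no_arg'; apply: (hk_Mat HE (s := x) (n := n)); rewrite ?head_argnorm.
    * split=> H1.
      -- by apply: no_arg; apply: (hk_Dec HE ne (s := x) (n := n)); rewrite ?head_argnorm.
      -- by apply: no_arg'; apply: (hk_Dec HE ne (s := x) (n := n)); rewrite ?head_argnorm.
  + move=> u v /=; case: eq_comparable => [e|ne]; last by case.
    subst b => /= -[H1 H2] /(hk_BE HE) [[Hu Hv]|[Hu Hv]]; [exact: H1|exact: H2].
- split.
  + by move=> h h' H a c Ha Hc Hac; apply: IHspine2; apply: spine_App.
  + move=> u v Huv /(hk_FE HE) [n]; rewrite !nf_App_nf; apply: IHNeq2.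
    by apply: Huv; apply: IHspine1; apply: spine_var.
Qed.

Lemma compat_var s n : compat (Nm bo (NVar s n)) (Nm bo (NVar s n)).
Proof. by apply: (compat_spec s).1; apply: spine_var. Qed.

Lemma compat_not_Neq s (u v : tm s) : compat u v -> ~ E (Neq (nf u) (nf v)).
Proof. exact: (compat_spec s).2. Qed.

Definition discriminant (b : B) (a : tm (Base b) -> Prop) : Prop :=
  (forall u, a u -> nf u = u) /\ (forall u v, a u -> a v -> compat u v) /\
  (forall u, nf u = u -> compat u u -> (forall v, a v -> compat u v) -> a u).

(* A value at base type [b] is a truth value if [b] is [o] and a discriminant
   otherwise; both are packed into one type so that no cast along [b = bo] is needed. *)
Definition base_ok (b : B) (p : bool * (tm (Base b) -> Prop)) : Prop :=
  if eq_comparable b bo then p.2 = (fun _ => False) else p.1 = false /\ discriminant p.2.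

Definition Dbase (b : B) := {p : bool * (tm (Base b) -> Prop) | base_ok p}.

Definition poss_base (b : B) (u : tm (Base b)) (p : Dbase b) : Prop :=
  match eq_comparable b bo with
  | left e => if (sval p).1 then ~ E (Neg (castO e (nf u))) else ~ E (castO e (nf u))
  | right _ => (sval p).2 (nf u)
  end.

(* The domain at each type together with the relation "the term possesses the value".
   A formula possesses every truth value that [E] does not refute, and a function value
   must be possessed by some term. *)
Fixpoint dom_poss (s : ty) : {T : Type & tm s -> T -> Prop} :=
  match s with
  | Base b => existT _ (Dbase b) (@poss_base b)
  | Arr s1 s2 => existT (fun T => tm (Arr s1 s2) -> T -> Prop)
      {f : projT1 (dom_poss s1) -> projT1 (dom_poss s2) |
        exists u : tm (Arr s1 s2), forall w a,
          projT2 (dom_poss s1) w a -> projT2 (dom_poss s2) (App u w) (f a)}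
      (fun u f => forall w a,
         projT2 (dom_poss s1) w a -> projT2 (dom_poss s2) (App u w) (sval f a))
  end.

Definition Dom (s : ty) : Type := projT1 (dom_poss s).
Definition poss (s : ty) : tm s -> Dom s -> Prop := projT2 (dom_poss s).

Lemma base_ok_bool c : @base_ok bo (c, fun _ => False).
Proof. by rewrite /base_ok eq_comparable_bo. Qed.

Definition of_bool (c : bool) : Dom o := exist _ (c, fun _ => False) (base_ok_bool c).
Definition to_bool (p : Dom o) : bool := (sval p).1.

Lemma of_boolK : cancel of_bool to_bool. Proof. by []. Qed.

Lemma to_boolK : cancel to_bool of_bool.
Proof.
case=> [[c a] ok]; rewrite /of_bool /to_bool /=.
have ea : a = (fun _ => False) by move: ok; rewrite /base_ok eq_comparable_bo.
subst a; congr exist; exact: proof_irrelevance.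
Qed.

Lemma poss_o (u : tm o) (p : Dom o) :
  poss u p <-> if to_bool p then ~ E (Neg (nf u)) else ~ E (nf u).
Proof. by rewrite /poss /Defs.o /= /poss_base eq_comparable_bo. Qed.

Lemma poss_sort al (ne : al <> bo) (u : tm (Base al)) (p : Dom (Base al)) :
  poss u p <-> (sval p).2 (nf u).
Proof. by rewrite /poss /= /poss_base; case: eq_comparable. Qed.

Lemma discriminant_val al (ne : al <> bo) (p : Dom (Base al)) :
  (sval p).1 = false /\ discriminant (sval p).2.
Proof. by case: p => p /=; rewrite /base_ok; case: eq_comparable. Qed.

Lemma base_ok_disc al (ne : al <> bo) a : discriminant a -> @base_ok al (false, a).
Proof. by rewrite /base_ok; case: eq_comparable. Qed.

Definition of_disc al (ne : al <> bo) a (H : discriminant a) : Dom (Base al) :=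
  exist _ (false, a) (base_ok_disc ne H).

Lemma sort_value_ext al (ne : al <> bo) (p q : Dom (Base al)) :
  (forall u, (sval p).2 u <-> (sval q).2 u) -> p = q.
Proof.
move=> H; case: (discriminant_val ne p) (discriminant_val ne q) => [p1 _] [q1 _].
case: p q H p1 q1 => [[c a] Hp] [[c' a'] Hq] /= H p1 q1; subst c c'.
have ea : a = a' by apply: functional_extensionality => u; apply: propositional_extensionality.
subst a'; congr exist; exact: proof_irrelevance.
Qed.

Lemma fun_value_ext s t (f g : Dom (Arr s t)) : (forall a, sval f a = sval g a) -> f = g.
Proof.
case: f g => [f Hf] [g Hg] /= H.
have efg : f = g by apply: functional_extensionality.
subst g; congr exist; exact: proof_irrelevance.
Qed.

Lemma poss_nf s (u : tm s) a : poss u a <-> poss (nf u) a.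
Proof.
elim: s u a => [b|s1 IH1 s2 IH2] u a; first by rewrite /poss /= /poss_base nf_idem.
rewrite /poss /=; split=> H w c Hw.
- by rewrite -/(poss _ _) IH2 nf_App_nf -IH2; apply: H.
- by rewrite -/(poss _ _) IH2 -(nf_App_nf u) -IH2; apply: H.
Qed.

(* At sorts the common value of a clique is a maximal clique extending it. *)
Lemma compat_values s :
  (forall T : tm s -> Prop, (forall u v, T u -> T v -> compat u v) ->
     exists a : Dom s, forall u, T u -> poss u a) /\
  (forall u v (a : Dom s), poss u a -> poss v a -> compat u v).
Proof.
elim: s => [b|s1 [clique1 share1] s2 [clique2 share2]].
- case: (eq_comparable b bo) => [e|ne].
  + subst b; split.
    * move=> T HT; case: (classic (exists t, T t /\ E (nf t))) => [[t0 [Tt0 Et0]]|nE].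
      -- exists (of_bool true) => u Tu; rewrite poss_o /= => H.
         by case/compat_o: (HT t0 u Tt0 Tu) => H1 _; apply: H1.
      -- exists (of_bool false) => u Tu; rewrite poss_o /= => H; apply: nE; by exists u.
    * move=> u v a; rewrite !poss_o compat_o; case: (to_bool a); tauto.
  + split.
    * move=> T HT.
      have [a [Sa [aN [aC amax]]]] := @maximal_clique_ext _ (fun u => nf u = u)
          (@compat (Base b)) (fun u => exists t, T t /\ u = nf t)
          (fun u '(ex_intro t (conj _ e)) => ltac:(by rewrite e nf_idem))
          (fun u v '(ex_intro t (conj Tt e)) '(ex_intro t' (conj Tt' e')) =>
             ltac:(by rewrite e e' -compat_nf; apply: HT)).
      have Ha : discriminant a.
        do 2!split => //; move=> u Nu Cu Hu; apply: amax => // v av.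
        by split; [apply: Hu | apply: compat_sym; apply: Hu].
      exists (of_disc ne Ha) => u Tu; rewrite (poss_sort ne) /=.
      by apply: Sa; exists u.
    * move=> u v p; rewrite !(poss_sort ne) => Hu Hv.
      case: (discriminant_val ne p) => _ [_ [Hc _]]; rewrite compat_nf; exact: Hc.
- split.
  + move=> T HT.
    (* an empty [T] is replaced by a variable so that the value is possessed by some term *)
    pose x := Nm bo (NVar (Arr s1 s2) 0).
    pose T' u := T u \/ (~ (exists w, T w) /\ u = x).
    have HT' u v : T' u -> T' v -> compat u v.
      case=> [Tu|[nT ->]] [Tv|[nT' ->]]; first exact: HT.
      * by case: nT'; exists u.
      * by case: nT; exists v.
      * exact: compat_var.
    have [u0 Tu0] : exists u0, T' u0.
      by case: (classic (exists w, T w)) => [[w Tw]|nT]; [exists w; left | exists x; right].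
    pose Ta (a : Dom s1) (w : tm s2) := exists u t, T' u /\ poss t a /\ w = App u t.
    have HTa a u v : Ta a u -> Ta a v -> compat u v.
      move=> [u1 [t [Tu [Ht ->]]]] [u2 [t' [Tu' [Ht' ->]]]].
      by apply: HT' => //; apply: share1; eassumption.
    have [F HF] : exists F : Dom s1 -> Dom s2, forall a w, Ta a w -> poss w (F a).
      apply: (choice (fun a b => forall w, Ta a w -> poss w b)) => a.
      by apply: clique2; apply: HTa.
    have HF' a u t : T' u -> poss t a -> poss (App u t) (F a).
      by move=> Tu Ht; apply: HF; exists u, t.
    exists (exist _ F (ex_intro _ u0 (fun w a => HF' a u0 w Tu0)) : Dom (Arr s1 s2)).
    by move=> u Tu w a Hw /=; apply: HF'; first left.
  + move=> u v f Hu Hv a c Ha Hc Hac.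
    have [d Hd] := clique1 (fun w => w = a \/ w = c)
      (fun w1 w2 H1 H2 => ltac:(case: H1 H2 => -> [] ->; by [|apply: compat_sym])).
    by apply: (share2 _ _ (sval f d)); [apply: Hu|apply: Hv]; apply: Hd; [left|right].
Qed.

Lemma poss_exists s (u : tm s) : compat u u -> exists a, poss u a.
Proof.
move=> H; have [a Ha] := (compat_values s).1 (fun w => w = u)
  (fun w1 w2 e1 e2 => ltac:(by rewrite e1 e2)).
by exists a; apply: Ha.
Qed.

Lemma poss_compat s (u v : tm s) a : poss u a -> poss v a -> compat u v.
Proof. exact: (compat_values s).2. Qed.

Lemma value_possessed s (a : Dom s) : exists u, poss u a.
Proof.
elim: s a => [b|s1 _ s2 _] a; last by case: a => f [u Hu]; exists u.
case: (eq_comparable b bo) => [e|ne].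
- subst b; pose p : tm o := Nm bo (NVar o 0).
  have Np : nf p = p by exact: nf_var.
  have /compat_o [Cp _] := compat_var o 0; rewrite -/p Np in Cp.
  rewrite -(to_boolK a); case: (to_bool a).
  + case: (classic (E (Neg p))) => Hn; last by exists p; rewrite poss_o /= Np.
    exists (Neg p); rewrite poss_o /= nf_Neg Np => /(hk_DN HE) Hp; exact: Cp.
  + case: (classic (E p)) => Hp; last by exists p; rewrite poss_o /= Np.
    exists (Neg p); rewrite poss_o /= nf_Neg Np => Hn; exact: Cp.
- case: (discriminant_val ne a) => _ [aN [aC amax]].
  case: (classic (exists v, (sval a).2 v)) => [[v av]|nv].
  + by exists v; rewrite (poss_sort ne) (aN _ av).
  + exists (Nm bo (NVar (Base b) 0)); rewrite (poss_sort ne) nf_var.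
    apply: amax; [exact: nf_var | exact: compat_var | by move=> v av; case: nv; exists v].
Qed.

Lemma sort_value_rep al (ne : al <> bo) (p q : Dom (Base al)) (s0 : tm (Base al)) :
  (sval p).2 s0 -> (sval q).2 s0 ->
  (forall w z, nf w = w -> nf z = z -> compat w s0 -> compat z s0 -> compat w z) ->
  p = q.
Proof.
have rep (r : Dom (Base al)) : (sval r).2 s0 ->
    (forall w z, nf w = w -> nf z = z -> compat w s0 -> compat z s0 -> compat w z) ->
    forall w, (sval r).2 w <-> nf w = w /\ compat w s0.
  move=> Hs Hcl w; case: (discriminant_val ne r) => _ [aN [aC amax]]; split.
  - by move=> Hw; split; [apply: aN | apply: aC].
  - move=> [Nw Cw]; apply: amax => //; first exact: Hcl.
    by move=> v av; apply: Hcl => //; [apply: aN | apply: aC].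
move=> Hp Hq Hcl; apply: (sort_value_ext ne) => w.
by rewrite (rep p Hp Hcl) (rep q Hq Hcl).
Qed.

Lemma sort_compat_Eqt al (ne : al <> bo) (s t w z : tm (Base al)) :
  nf w = w -> nf z = z -> nf s = s -> E (Eqt s t) ->
  compat w s -> compat z s -> compat w z.
Proof.
move=> Nw Nz Ns Est; rewrite !(compat_sort ne) Nw Nz Ns => -[_ Hsw] [_ Hsz].
by split=> /(hk_Con HE ne Est) [[]|[]].
Qed.

Lemma poss_Eqt s (u v : tm s) a c : E (Eqt u v) -> poss u a -> poss v c -> a = c.
Proof.
elim: s u v a c => [b|s1 _ s2 IH2] u v a c Euv.
- have [Nu Nv] := E_Eqt_nf Euv.
  case: (eq_comparable b bo) => [e|ne].
  + subst b; rewrite !poss_o Nu Nv => Ha Hc.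
    rewrite -(to_boolK a) -(to_boolK c); congr of_bool.
    by case: (hk_BQ HE Euv) => -[Eu Ev]; move: Ha Hc; case: (to_bool a); case: (to_bool c).
  + move=> Ha Hc; have Cu := poss_compat Ha Ha.
    rewrite (poss_sort ne) Nu in Ha; rewrite (poss_sort ne) Nv in Hc.
    have clique_u w z : nf w = w -> nf z = z -> compat w u -> compat z u -> compat w z.
      by move=> Nw Nz; apply: sort_compat_Eqt Euv.
    apply: (sort_value_rep ne Ha _ clique_u).
    case: (discriminant_val ne c) => _ [cN [cC cmax]]; apply: cmax => // z cz.
    have := cC _ _ cz Hc; move: Cu; rewrite !(compat_sort ne) Nu Nv (cN _ cz).
    move=> [Nuu _] [_ Nvz]; split=> /(hk_Con HE ne Euv) [[]|[]] //; by move=> _ /Nvz.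
- move=> Ha Hc; apply: fun_value_ext => d.
  have [w Hw] := value_possessed d; rewrite poss_nf in Hw.
  apply: (IH2 _ _ _ _ (hk_FQ HE Euv (nf_idem w))); rewrite -poss_nf; [exact: Ha|exact: Hc].
Qed.

Lemma poss_not_Neq s (u v : tm s) a : poss u a -> poss v a -> ~ E (Neq (nf u) (nf v)).
Proof. by move=> Hu Hv; apply: compat_not_Neq; apply: poss_compat Hu Hv. Qed.

Lemma poss_functional (Hc : hintikka_complete nf E) s (u : tm s) a c :
  poss u a -> poss u c -> a = c.
Proof.
elim: s u a c => [b|s1 _ s2 IH2] u a c.
- case: (eq_comparable b bo) => [e|ne].
  + subst b; rewrite !poss_o => Ha Hb; rewrite -(to_boolK a) -(to_boolK c); congr of_bool.
    case: (Hc (nf u) (nf_idem u)) => H; move: Ha Hb;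
      by case: (to_bool a); case: (to_bool c) => //; tauto.
  + rewrite !(poss_sort ne) => Ha Hb; apply: (sort_value_rep ne Ha Hb).
    have Ns0 := nf_idem u; move=> w z Nw Nz Hw.
    apply: (sort_compat_Eqt ne Nw Nz Ns0 (t := w)) => //.
    have Enu : nf (Eqt (nf u) w) = Eqt (nf u) w by rewrite nf_Eqt Ns0 Nw.
    case: (Hc _ Enu) => // Neq; move: Hw; rewrite (compat_sort ne) Nw Ns0; by case.
- move=> Ha Hb; apply: fun_value_ext => d.
  have [w Hw] := value_possessed d; apply: (IH2 (App u w)); [exact: Ha|exact: Hb].
Qed.

Lemma poss_Neg (w : tm o) a : poss w a -> poss (Neg w) (of_bool (~~ to_bool a)).
Proof. rewrite !poss_o of_boolK nf_Neg; case: (to_bool a) => //= H; by move=> /(hk_DN HE). Qed.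

Definition neg_value : Dom (Arr o o) :=
  exist _ (fun a => of_bool (~~ to_bool a)) (ex_intro _ (Nm bo (NNeg B)) poss_Neg).

Definition eq_bool s (a c : Dom s) : bool :=
  if excluded_middle_informative (a = c) then true else false.

Lemma eq_boolP s (a c : Dom s) : eq_bool a c = true <-> a = c.
Proof. by rewrite /eq_bool; case: excluded_middle_informative. Qed.

Lemma poss_Eqt_value s (w z : tm s) a c :
  poss w a -> poss z c -> poss (Eqt w z) (of_bool (eq_bool a c)).
Proof.
move=> Hw Hz; rewrite poss_o of_boolK nf_Eqt /eq_bool.
case: excluded_middle_informative => [eac|ne].
- by rewrite eac in Hw; apply: poss_not_Neq Hw Hz.
- by move=> Ewz; apply: ne; apply: poss_Eqt Ewz _ _; rewrite -poss_nf.
Qed.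

Lemma eq_value_at_ok s (a : Dom s) :
  exists u : tm (Arr s o), forall z c, poss z c -> poss (App u z) (of_bool (eq_bool a c)).
Proof.
have [w Hw] := value_possessed a; exists (App (Nm bo (NEq s)) w) => z c Hz.
exact: poss_Eqt_value.
Qed.

Definition eq_value_at s (a : Dom s) : Dom (Arr s o) :=
  exist _ (fun c => of_bool (eq_bool a c)) (eq_value_at_ok a).

Lemma eq_value_ok s :
  exists u : tm (Arr s (Arr s o)), forall w a, poss w a -> poss (App u w) (eq_value_at a).
Proof. by exists (Nm bo (NEq s)) => w a Hw z c Hz; apply: poss_Eqt_value. Qed.

Definition eq_value s : Dom (Arr s (Arr s o)) := exist _ (@eq_value_at s) (eq_value_ok s).

Definition app_value s t (f : Dom (Arr s t)) (a : Dom s) : Dom t := sval f a.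

Lemma Dom_inhabited s : inhabited (Dom s).
Proof. have [a _] := poss_exists (compat_var s 0); exact: inhabits a. Qed.

Definition value_frame : frame B := @Frame B Dom app_value fun_value_ext Dom_inhabited.

Definition var_value s n : Dom s := epsilon (Dom_inhabited s) (poss (Nm bo (NVar s n))).

Definition value_asg : asg bo value_frame := fun y =>
  match y as y0 return Dom (nty bo y0) with
  | NVar s n => var_value s n
  | NNeg => neg_value
  | NEq s => eq_value s
  end.

Lemma poss_value_asg y : poss (Nm bo y) (value_asg y).
Proof.
case: y => [s n||s] /=.
- by apply: epsilon_spec; apply: poss_exists; apply: compat_var.
- by move=> w a; apply: poss_Neg.
- by move=> w a Hw z c Hz; apply: poss_Eqt_value.
Qed.

Variable sb : sub bo -> forall s, tm s -> tm s.
Hypothesis HS : is_subst nf sb.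

Definition subst_name (th : sub bo) (y : name) : tm (nty bo y) :=
  if th y is Some u then u else Nm bo y.

Definition poss_subst (th : sub bo) (I : asg bo value_frame) : Prop :=
  forall y, poss (subst_name th y) (I y).

Lemma poss_subst_upd th I x (w : tm (nty bo x)) (a : Dom (nty bo x)) :
  poss w a -> poss_subst th I -> poss_subst (@supd _ _ th x w) (@upd _ _ _ I x a).
Proof.
move=> Hw Hth y; case: (name_eq_dec x y) => [<-|ne].
- by rewrite /subst_name supd_same upd_same.
- by rewrite /subst_name supd_other // upd_other.
Qed.

(* Substitution lemma for possible values; in the [Lam] case the function value is
   realised by the substituted abstraction [sb th (Lam x u)], thanks to (S3). *)
Lemma ev_poss_subst s (t : tm s) I th : poss_subst th I ->
  exists a, ev I t a /\ poss (sb th t) a.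
Proof.
case: HS => S1 [S2 [S3 _]].
elim: t I th => [x|s0 t0 u IHu v IHv|x t0 u IHu] I th Hth.
- by exists (I x); split; [apply: ev_Nm | rewrite S1; apply: Hth].
- have [f [Hf Pf]] := IHu I th Hth; have [a [Ha Pa]] := IHv I th Hth.
  by exists (app_value f a); split; [apply: ev_App | rewrite S2; apply: Pf].
- have [g Hg] : exists g : Dom (nty bo x) -> Dom t0, forall a, ev (@upd _ _ _ I x a) u (g a).
    apply: (choice (fun a b => ev (@upd _ _ _ I x a) u b)) => a.
    have [w Hw] := value_possessed a.
    by have [b [Hb _]] := IHu _ _ (poss_subst_upd Hw Hth); exists b.
  have key w a : poss w a -> poss (App (sb th (Lam x u)) w) (g a).
    move=> Hw; have [b [Hb Pb]] := IHu _ _ (poss_subst_upd Hw Hth).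
    by rewrite (ev_functional (Hg a) Hb) poss_nf S3 -poss_nf.
  exists (exist _ g (ex_intro _ (sb th (Lam x u)) key) : Dom (Arr (nty bo x) t0)).
  by split; [apply: ev_Lam | apply: key].
Qed.

Lemma ev_poss s (t : tm s) : exists a, ev value_asg t a /\ poss t a.
Proof.
have [a [Ha Pa]] := @ev_poss_subst _ t value_asg (sub0 bo) poss_value_asg.
exists a; split => //; case: HS => _ [_ [_ S4]].
by rewrite poss_nf -S4 -poss_nf.
Qed.

Lemma model_of_hintikka (A : tm o -> Prop) : (forall s, A s -> E s) -> model value_asg A.
Proof.
move=> AE; split.
  by move=> s t; have [a [Ha _]] := ev_poss t; exists a.
exists to_bool; split.
  split; first by exists of_bool; [apply: to_boolK | apply: of_boolK].
  by split=> // s a c; apply: eq_boolP.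
move=> s As; have [v [Hv Pv]] := ev_poss s; exists v; split => //.
move: Pv; rewrite poss_o (E_nf (AE _ As)); case: (to_bool v) => // nEs.
by case: nEs; apply: AE.
Qed.

Lemma surjective_of_hintikka_complete :
  hintikka_complete nf E -> surjective value_asg.
Proof.
move=> Hc s a; have [t Ht] := value_possessed a; have [a' [Ha' Pa']] := ev_poss t.
by exists t; rewrite (poss_functional Hc Ht Pa').
Qed.

End PossibleValues.

Lemma enumerate_infinitely_often (T : Type) (C : countType) (code : T -> C) :
  injective code -> inhabited T ->
  exists task : nat -> T, forall x k0, exists2 k, k0 <= k & task k = x.
Proof.
move=> code_inj inhT; pose c x := pickle (code x).
have c_inj : injective c by apply: inj_comp code_inj; apply: pcan_inj pickleK.
exists (fun k => epsilon inhT (fun x => c x = (Cantor.of_nat k).1)) => x k0.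
exists (Cantor.to_nat (c x, k0)).
  by apply: leq_trans (leq_addr _ _) _; apply/leP; apply: Cantor.to_nat_non_decreasing.
apply: c_inj; rewrite Cantor.cancel_of_to /=.
by apply: (epsilon_spec inhT (fun y => c y = c x)); exists x.
Qed.

Section Requests.
Variables (B : countType) (bo : B).
Local Notation ty := (ty B).
Local Notation tm := (tm bo).
Local Notation name := (name B).
Local Notation o := (o bo).

Inductive request : Type :=
| ReqDN (s : tm o)
| ReqBQ (s t : tm o)
| ReqBE (s t : tm o)
| ReqFQ (s t : ty) (f g : tm (Arr s t)) (u : tm s)
| ReqFE (s t : ty) (f g : tm (Arr s t))
| ReqMat (u v : tm o)
| ReqDec (al : B) (u v : tm (Base al))
| ReqCon (al : B) (s t u v : tm (Base al))
| ReqCompl (s : tm o).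

Fixpoint enc_ty (s : ty) : GenTree.tree nat :=
  match s with
  | Base b => GenTree.Leaf (pickle b)
  | Arr s t => GenTree.Node 0 [:: enc_ty s; enc_ty t]
  end.

Definition enc_name (x : name) : GenTree.tree nat :=
  match x with
  | NVar s n => GenTree.Node 0 [:: enc_ty s; GenTree.Leaf n]
  | NNeg => GenTree.Node 1 [::]
  | NEq s => GenTree.Node 2 [:: enc_ty s]
  end.

Fixpoint enc_tm s (t : tm s) : GenTree.tree nat :=
  match t with
  | Nm x => GenTree.Node 0 [:: enc_name x]
  | App s _ u v => GenTree.Node 1 [:: enc_ty s; enc_tm u; enc_tm v]
  | Lam x _ u => GenTree.Node 2 [:: enc_name x; enc_tm u]
  end.

Lemma enc_ty_inj : injective enc_ty.
Proof.
elim=> [b|s1 IH1 s2 IH2] [b'|s1' s2'] //=; first by case=> /(pcan_inj pickleK) ->.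
by case=> /IH1 -> /IH2 ->.
Qed.

Lemma enc_name_inj : injective enc_name.
Proof.
case=> [s n||s] [s' n'||s'] //=; first by case=> /enc_ty_inj -> ->.
by case=> /enc_ty_inj ->.
Qed.

Lemma enc_tm_inj s (u : tm s) s' (u' : tm s') : enc_tm u = enc_tm u' ->
  existT (fun s => tm s) s u = existT _ s' u'.
Proof.
elim: u s' u' => [x|s0 t0 u IHu v IHv|x t0 u IHu] s' u';
  case: u' => [x'|s1 t1 u' v'|x' t1 u'] //=.
- by case=> /enc_name_inj ->.
- case=> /enc_ty_inj e /IHu Hu /IHv Hv; subst s1.
  have e : t0 = t1 by move: (congr1 (@projT1 _ _) Hu) => /= [].
  by subst t1; move: Hu Hv => /tm_existT_inj -> /tm_existT_inj ->.
- case=> /enc_name_inj e /IHu Hu; subst x'.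
  have e : t0 = t1 by move: (congr1 (@projT1 _ _) Hu).
  by subst t1; move: Hu => /tm_existT_inj ->.
Qed.

Lemma enc_tm_ty s (u : tm s) s' (u' : tm s') : enc_tm u = enc_tm u' -> s = s'.
Proof. by move/enc_tm_inj/(congr1 (@projT1 _ _)). Qed.

Lemma enc_tm_same s (u u' : tm s) : enc_tm u = enc_tm u' -> u = u'.
Proof. by move/enc_tm_inj/tm_existT_inj. Qed.

Definition enc_request (r : request) : GenTree.tree nat :=
  match r with
  | ReqDN s => GenTree.Node 0 [:: enc_tm s]
  | ReqBQ s t => GenTree.Node 1 [:: enc_tm s; enc_tm t]
  | ReqBE s t => GenTree.Node 2 [:: enc_tm s; enc_tm t]
  | ReqFQ _ _ f g u => GenTree.Node 3 [:: enc_tm f; enc_tm g; enc_tm u]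
  | ReqFE _ _ f g => GenTree.Node 4 [:: enc_tm f; enc_tm g]
  | ReqMat u v => GenTree.Node 5 [:: enc_tm u; enc_tm v]
  | ReqDec _ u v => GenTree.Node 6 [:: enc_tm u; enc_tm v]
  | ReqCon _ s t u v => GenTree.Node 7 [:: enc_tm s; enc_tm t; enc_tm u; enc_tm v]
  | ReqCompl s => GenTree.Node 8 [:: enc_tm s]
  end.

Lemma enc_request_inj : injective enc_request.
Proof.
case=> [s|s t|s t|s t f g u|s t f g|u v|al u v|al s t u v|s];
case=> [s'|s' t'|s' t'|s' t' f' g' u'|s' t' f' g'|u' v'|al' u' v'|al' s' t' u' v'|s'] //=;
  case.
- by move=> /enc_tm_same ->.
- by move=> /enc_tm_same -> /enc_tm_same ->.
- by move=> /enc_tm_same -> /enc_tm_same ->.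
- move=> ef; case: (enc_tm_ty ef) => es et; subst s' t'.
  by move: ef => /enc_tm_same -> /enc_tm_same -> /enc_tm_same ->.
- move=> ef; case: (enc_tm_ty ef) => es et; subst s' t'.
  by move: ef => /enc_tm_same -> /enc_tm_same ->.
- by move=> /enc_tm_same -> /enc_tm_same ->.
- move=> eu; case: (enc_tm_ty eu) => eal; subst al'.
  by move: eu => /enc_tm_same -> /enc_tm_same ->.
- move=> es; case: (enc_tm_ty es) => eal; subst al'.
  by move: es => /enc_tm_same -> /enc_tm_same -> /enc_tm_same -> /enc_tm_same ->.
- by move=> /enc_tm_same ->.
Qed.

End Requests.

Section HintikkaExtension.
Variables (B : countType) (bo : B) (nf : forall s, tm bo s -> tm bo s).
Variable G : (tm bo (o bo) -> Prop) -> Prop.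
Hypothesis HG : acc nf G.
Local Notation tm := (tm bo).
Local Notation o := (o bo).

Definition side_condition (r : request bo) : Prop :=
  match r with
  | ReqFQ _ _ _ _ u => normal nf u
  | ReqMat u v => exists s n, Defs.head u = Some (NVar s n) /\ Defs.head v = Some (NVar s n)
  | ReqDec al u v =>
      al <> bo /\ exists s n, Defs.head u = Some (NVar s n) /\ Defs.head v = Some (NVar s n)
  | ReqCon al _ _ _ _ => al <> bo
  | ReqCompl s => complete nf G /\ normal nf s
  | _ => True
  end.

Definition premises (r : request bo) : seq (tm o) :=
  match r with
  | ReqDN s => [:: Neg (Neg s)]
  | ReqBQ s t => [:: Eqt s t]
  | ReqBE s t => [:: Neq s t]
  | ReqFQ _ _ f g _ => [:: Eqt f g]
  | ReqFE _ _ f g => [:: Neq f g]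
  | ReqMat u v => [:: u; Neg v]
  | ReqDec _ u v => [:: Neq u v]
  | ReqCon _ s t u v => [:: Eqt s t; Neq u v]
  | ReqCompl _ => [::]
  end.

Definition conclusion (r : request bo) (A : tm o -> Prop) : Prop :=
  match r with
  | ReqDN s => A s
  | ReqBQ s t => A s /\ A t \/ A (Neg s) /\ A (Neg t)
  | ReqBE s t => A s /\ A (Neg t) \/ A (Neg s) /\ A t
  | ReqFQ _ t f g u => A (Eqt (nf (App f u)) (nf (App g u)))
  | ReqFE s t f g => exists n,
      A (Neq (nf (App f (Nm bo (NVar s n)))) (nf (App g (Nm bo (NVar s n)))))
  | ReqMat u v => some_arg (fun _ a c => A (Neq a c)) u v
  | ReqDec _ u v => some_arg (fun _ a c => A (Neq a c)) u v
  | ReqCon _ s t u v => A (Neq s u) /\ A (Neq t u) \/ A (Neq s v) /\ A (Neq t v)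
  | ReqCompl s => A s \/ A (Neg s)
  end.

Definition all_in (A : tm o -> Prop) (l : seq (tm o)) : Prop :=
  foldr (fun u P => A u /\ P) True l.

Definition fulfils (r : request bo) (A A' : tm o -> Prop) : Prop :=
  side_condition r -> all_in A (premises r) -> conclusion r A'.

Lemma all_in_mono (A A' : tm o -> Prop) l :
  (forall u, A u -> A' u) -> all_in A l -> all_in A' l.
Proof. by move=> AA'; elim: l => [|u l IH] //= [/AA' Au /IH]. Qed.

Lemma conclusion_mono r (A A' : tm o -> Prop) :
  (forall u, A u -> A' u) -> conclusion r A -> conclusion r A'.
Proof.
move=> AA'; case: r => /= [s|s t|s t|s t f g u|s t f g|u v|al u v|al s t u v|s];
  try by [auto | intuition].
- by case=> n An; exists n; apply: AA'.
- by apply: some_arg_mono => ? ? ?; apply: AA'.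
- by apply: some_arg_mono => ? ? ?; apply: AA'.
Qed.

Lemma some_arg_extension (A : tm o -> Prop) t (u v : tm t) :
  some_arg (fun _ a c => G (add A (Neq a c))) u v ->
  exists A', G A' /\ (forall x, A x -> A' x) /\ some_arg (fun _ a c => A' (Neq a c)) u v.
Proof.
elim=> [s t0 u0 v0 a c GA|s t0 u0 v0 a c _ [A' [GA' [AA' HA']]]].
- exists (add A (Neq a c)); split=> //; split; first by move=> x; left.
  by apply: sa_here; right.
- by exists A'; split=> //; split=> //; apply: sa_there.
Qed.

Lemma request_extension r (A : tm o -> Prop) : G A -> side_condition r ->
  all_in A (premises r) ->
  exists A', G A' /\ (forall x, A x -> A' x) /\ conclusion r A'.
Proof.
have add1 s x : A x -> add A s x by left.
have add2 s t x : A x -> add (add A s) t x by left; left.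
move=> GA; case: r => /= [s|s t|s t|s t f g u|s t f g|u v|al u v|al s t u v|s] side.
- case=> H _; exists (add A s); split; first exact (acc_DN HG GA H).
  by split; [apply: add1 | right].
- case=> H _; case: (acc_BQ HG GA H) => GA';
    [exists (add (add A s) t) | exists (add (add A (Neg s)) (Neg t))];
    (split=> //; split; first exact: add2); [left|right]; split; by [left; right|right].
- case=> H _; case: (acc_BE HG GA H) => GA';
    [exists (add (add A s) (Neg t)) | exists (add (add A (Neg s)) t)];
    (split=> //; split; first exact: add2); [left|right]; split; by [left; right|right].
- case=> H _; exists (add A (Eqt (nf (App f u)) (nf (App g u)))).
  split; first exact (acc_FQ HG GA H side).
  by split; [apply: add1 | right].
- case=> H _; have [n GA'] := acc_FE HG GA H.
  by eexists; split; [exact: GA' | split; [apply: add1 | exists n; right]].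
- case: side => s [n [hu hv]] [Hu [Hv _]].
  exact: some_arg_extension (acc_Mat HG GA hu hv Hu Hv).
- case: side => ne [s [n [hu hv]]] [H _].
  exact: some_arg_extension (acc_Dec HG GA ne hu hv H).
- case=> H1 [H2 _]; case: (acc_Con HG GA side H1 H2) => GA';
    [exists (add (add A (Neq s u)) (Neq t u)) | exists (add (add A (Neq s v)) (Neq t v))];
    (split=> //; split; first exact: add2); [left|right]; split; by [left; right|right].
- case: side => Hc N _; case: (Hc A GA s N) => GA';
    [exists (add A s) | exists (add A (Neg s))];
    (split=> //; split; first exact: add1); [left|right]; by right.
Qed.

Lemma fulfilling_step : exists step : (tm o -> Prop) -> request bo -> tm o -> Prop,
  forall A r, G A -> G (step A r) /\ (forall x, A x -> step A r x) /\ fulfils r A (step A r).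
Proof.
apply: (choice (fun A step => forall r, G A -> G (step r) /\ (forall x, A x -> step r x) /\
  fulfils r A (step r))) => A.
apply: (choice (fun r A' => G A -> G A' /\ (forall x, A x -> A' x) /\ fulfils r A A')) => r.
case: (classic (G A /\ side_condition r /\ all_in A (premises r))).
- case=> GA [side prem]; have [A' [GA' [AA' HA']]] := request_extension GA side prem.
  by exists A' => _; split=> //; split=> // _ _.
- move=> nprem; exists A => GA; split=> //; split=> // side prem.
  by case: nprem.
Qed.

Section Chain.
Variable step : (tm o -> Prop) -> request bo -> tm o -> Prop.
Hypothesis step_spec : forall A r,
  G A -> G (step A r) /\ (forall x, A x -> step A r x) /\ fulfils r A (step A r).
Variable task : nat -> request bo.
Hypothesis task_io : forall r k0, exists2 k, k0 <= k & task k = r.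
Variable A0 : tm o -> Prop.
Hypothesis GA0 : G A0.

Fixpoint stage (k : nat) : tm o -> Prop :=
  if k is k'.+1 then step (stage k') (task k') else A0.

Definition limit (u : tm o) : Prop := exists k, stage k u.

Lemma stage_G k : G (stage k).
Proof. by elim: k => [|k IH] //=; case: (step_spec (task k) IH). Qed.

Lemma stage_mono k k' : k <= k' -> forall u, stage k u -> stage k' u.
Proof.
elim: k' => [|k' IH]; first by rewrite leqn0 => /eqP ->.
rewrite leq_eqVlt ltnS => /orP [/eqP -> //|/IH Hk u /Hk].
by case: (step_spec (task k') (stage_G k')) => _ [sub _]; apply: sub.
Qed.

Lemma limit_premises (l : seq (tm o)) : all_in limit l -> exists k, all_in (stage k) l.
Proof.
elim: l => [|u l IH [[k Hu] /IH [k' Hl]]]; first by exists 0.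
exists (maxn k k'); split; first by apply: stage_mono Hu; apply: leq_maxl.
by apply: all_in_mono Hl => v; apply: stage_mono; apply: leq_maxr.
Qed.

Lemma limit_fulfils r : fulfils r limit limit.
Proof.
move=> side /limit_premises [k0 prem].
have [k le_k0k ek] := task_io r k0; subst r.
have [_ [_ concl]] := step_spec (task k) (stage_G k).
have to_limit u : stage k.+1 u -> limit u by exists k.+1.
apply: (conclusion_mono to_limit (concl side _)).
by apply: all_in_mono prem => u; apply: stage_mono.
Qed.

Lemma limit_hintikka : hintikka nf limit.
Proof.
have F r := limit_fulfils r.
split.
- by move=> s [k Hs]; exact (acc_branch HG (stage_G k) Hs).
- by move=> s H; apply: (F (ReqDN s)).
- by move=> s t H; apply: (F (ReqBQ s t)).
- by move=> s t H; apply: (F (ReqBE s t)).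
- by move=> s t f g H u N; apply: (F (ReqFQ f g u)).
- by move=> s t f g H; apply: (F (ReqFE f g)).
- by move=> s n u v hu hv Hu Hv; apply: (F (ReqMat u v)) => //; exists s, n.
- by move=> al ne s n u v hu hv H; apply: (F (ReqDec u v)) => //; split=> //; exists s, n.
- by move=> al ne s t u v H1 H2; apply: (F (ReqCon s t u v)).
Qed.

Lemma limit_complete : complete nf G -> hintikka_complete nf limit.
Proof. by move=> Hc s N; apply: (limit_fulfils (r := ReqCompl s)). Qed.

End Chain.

Lemma hintikka_extension A : G A -> exists E,
  hintikka nf E /\ (forall s, A s -> E s) /\ (complete nf G -> hintikka_complete nf E).
Proof.
move=> GA; have [step step_spec] := fulfilling_step.
have [task task_io] := enumerate_infinitely_often (@enc_request_inj B bo)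
  (inhabits (ReqCompl (Nm bo (NVar o 0)))).
exists (limit step task A); split; first exact: limit_hintikka.
by split=> [s As|]; [exists 0 | apply: limit_complete].
Qed.

End HintikkaExtension.

Theorem theorem8p3 (B : countType) (bo : B)
    (nf : forall s, tm bo s -> tm bo s)
    (sb : sub bo -> forall s, tm bo s -> tm bo s)
    (G : (tm bo (o bo) -> Prop) -> Prop) (A : tm bo (o bo) -> Prop) :
  is_normalization nf -> is_subst nf sb -> acc nf G -> G A ->
  (exists (F : frame B) (I : asg bo F), model I A) /\
  (complete nf G -> exists (F : frame B) (I : asg bo F), model I A /\ surjective I).
Proof.
move=> HN HS HG GA.
have [E [HE [AE Ecompl]]] := hintikka_extension HG GA.
have M := model_of_hintikka HN HE HS AE.
split; first by exists _, (value_asg HN HE).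
move=> Hc; exists _, (value_asg HN HE); split=> //.
exact (surjective_of_hintikka_complete HS (Ecompl Hc)).
Qed.
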